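(* Let $A\in\mathbb{R}^{n\times n}$ be symmetric positive semidefinite, let $1\le k\le n$, and let $\mathrm{OPT}=\max_{\|y\|_2=1,\|y\|_0\le k} y^{\intercal}Ay$. For each $i\in[n]$ let $\hat x_i\in\mathbb{R}^n$ be defined by $[\hat x_i]_j=A_{i,j}$ if $|A_{i,j}|$ is one of the $k$ largest (in absolute value) entries of the $i$-th column $A_{\cdot,i}$, and $[\hat x_i]_j=0$ otherwise, and let $x_i=\hat x_i/\|\hat x_i\|_2$. Let $e_i$ denote the $i$-th standard basis vector. Then the best (i.e. maximizing $v^{\intercal}Av$) vector $v$ among all the $x_i$'s and $e_i$'s satisfies $v^{\intercal}Av\ge \mathrm{OPT}/\sqrt{k}$.
   Context: $\|y\|_0$ denotes the number of nonzero entries of $y$. Each $x_i$ and $e_i$ is a unit-norm $k$-sparse vector. *)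

From mathcomp Require Import all_boot all_order all_algebra.
Set Implicit Arguments. Unset Strict Implicit. Unset Printing Implicit Defensive.
Import Order.TTheory GRing.Theory Num.Theory.
Local Open Scope ring_scope.

Section Defs.
Variables (R : rcfType) (n : nat).

Definition qform (A : 'M[R]_n) (y : 'cV[R]_n) : R := (y^T *m A *m y) 0 0.

Definition norm2 (y : 'cV[R]_n) : R := Num.sqrt (\sum_j (y j 0) ^+ 2).

Definition norm0 (y : 'cV[R]_n) : nat := #|[set j | y j 0 != 0]|.

Definition symmetric_mx (A : 'M[R]_n) : Prop := A^T = A.
Definition psd (A : 'M[R]_n) : Prop := forall y : 'cV[R]_n, 0 <= qform A y.

Definition topk_support (A : 'M[R]_n) (k : nat) (i : 'I_n) (S : {set 'I_n}) : Prop :=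
  #|S| = k /\ forall j l, j \in S -> l \notin S -> `|A l i| <= `|A j i|.

Definition xhat (A : 'M[R]_n) (i : 'I_n) (S : {set 'I_n}) : 'cV[R]_n :=
  \col_j (if j \in S then A j i else 0).

Definition xnorm (A : 'M[R]_n) (i : 'I_n) (S : {set 'I_n}) : 'cV[R]_n :=
  (norm2 (xhat A i S))^-1 *: xhat A i S.

Definition std_basis (i : 'I_n) : 'cV[R]_n := delta_mx i 0.

Definition candidate (A : 'M[R]_n) (S : 'I_n -> {set 'I_n}) (v : 'cV[R]_n) : Prop :=
  exists i, v = xnorm A i (S i) \/ v = std_basis i.

End Defs.

(* Let c be the value of the best candidate and s_i = ||xhat_i||.  Positive
   semidefiniteness applied to xhat_i - s_i e_i, together with c >= A_ii and
   c >= x_i^T A x_i, gives s_i <= c.  By Cauchy-Schwarz and the top-k choice of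
   xhat_i, every k-sparse unit vector y has |(A y)_i| <= s_i <= c, hence
   y^T A y <= c ||y||_1 <= c sqrt k. *)

From mathcomp Require Import all_boot all_order all_algebra.
From mathcomp Require Import ring lra zify.
Import Order.TTheory GRing.Theory Num.Theory.
Local Open Scope ring_scope.

Lemma cauchy_schwarz {R : realFieldType} {I : finType} (a b : I -> R) :
  (\sum_i a i * b i) ^+ 2 <= (\sum_i a i ^+ 2) * (\sum_i b i ^+ 2).
Proof.
set A := \sum_i a i ^+ 2; set B := \sum_i b i ^+ 2; set C := \sum_i a i * b i.
have A_ge0 : 0 <= A by apply: sumr_ge0 => i _; exact: sqr_ge0.
have B_ge0 : 0 <= B by apply: sumr_ge0 => i _; exact: sqr_ge0.
have [B_gt0 | B_le0] := ltrP 0 B; last first.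
  have b0 i : b i = 0.
    apply/eqP; rewrite -sqrf_eq0; apply/eqP.
    have B0 : B = 0 by apply/eqP; rewrite eq_le B_le0 B_ge0.
    by move/psumr_eq0P: B0 => /(_ (fun j _ => sqr_ge0 (b j)) i isT).
  rewrite /C big1 => [|i _]; last by rewrite b0 mulr0.
  by rewrite expr0n mulr_ge0.
have : 0 <= \sum_i (B * a i - C * b i) ^+ 2 by apply: sumr_ge0 => i _; exact: sqr_ge0.
have -> : \sum_i (B * a i - C * b i) ^+ 2 = B * (A * B - C ^+ 2).
  rewrite (eq_bigr (fun i => B ^+ 2 * a i ^+ 2 - 2 * B * C * (a i * b i) + C ^+ 2 * b i ^+ 2));
    last by move=> i _; ring.
  rewrite !big_split /= sumrN -!mulr_sumr -/A -/B -/C; ring.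
by rewrite pmulr_rge0 // subr_ge0 mulrC.
Qed.

Lemma ler_sum_card_dom (R : numDomainType) (I : finType) (X Y : {set I}) (f : I -> R) :
  (#|X| <= #|Y|)%N -> (forall i, 0 <= f i) ->
  (forall x y, x \in X -> y \in Y -> f x <= f y) ->
  \sum_(x in X) f x <= \sum_(y in Y) f y.
Proof.
move=> leXY f_ge0 domXY.
have [Y0 | Y_gt0] := posnP #|Y|.
  have /eqP : #|X| = 0%N by lia.
  by rewrite cards_eq0 => /eqP ->; rewrite big_set0 sumr_ge0.
rewrite -(ler_pMn2r Y_gt0) -sumr_const.
apply: (@le_trans _ _ (\sum_(y in Y) \sum_(x in X) f y)).
  by apply: ler_sum => y yY; apply: ler_sum => x xX; exact: domXY.
rewrite exchange_big /= sumr_const -subr_ge0 -mulrnBr // mulrn_wge0 //; exact: sumr_ge0.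
Qed.

Lemma ler_sum_topset (R : numDomainType) (I : finType) (T S : {set I}) (f : I -> R) :
  (#|T| <= #|S|)%N -> (forall i, 0 <= f i) ->
  (forall j l, j \in S -> l \notin S -> f l <= f j) ->
  \sum_(i in T) f i <= \sum_(i in S) f i.
Proof.
move=> leTS f_ge0 top.
rewrite (big_setID S) [X in _ <= X](big_setID T) /= setIC lerD2l.
apply: ler_sum_card_dom => //.
  by have := cardsID S T; have := cardsID T S; rewrite setIC; lia.
by move=> x y; rewrite !inE => /andP[xS _] /andP[_ yS]; exact: top.
Qed.

Lemma ler_norm_sqr (R : realDomainType) (a b : R) :
  0 <= b -> a ^+ 2 <= b ^+ 2 -> `|a| <= b.
Proof.
move=> b_ge0; rewrite -[_ <= b]ler_sqr ?nnegrE ?normr_ge0 //.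
by rewrite real_normK ?num_real.
Qed.

Section QuadraticForm.
Context {R : rcfType} {n : nat} (A : 'M[R]_n).

Definition bform (u w : 'cV[R]_n) : R := (u^T *m A *m w) 0 0.

Lemma bform_sym u w : symmetric_mx A -> bform w u = bform u w.
Proof.
move=> symA; rewrite /bform; transitivity ((w^T *m A *m u)^T 0 0); first by rewrite [RHS]mxE.
by rewrite !trmx_mul trmxK symA mulmxA.
Qed.

Lemma qformZ t u : qform A (t *: u) = t ^+ 2 * qform A u.
Proof. by rewrite /qform [(_ *: _)^T]linearZ /= -!scalemxAl -!scalemxAr !mxE expr2 mulrA. Qed.

Lemma qformBZ u w t : symmetric_mx A ->
  qform A (u - t *: w) = qform A u - 2 * t * bform u w + t ^+ 2 * qform A w.
Proof.
move=> symA; have := bform_sym u w symA; rewrite /qform /bform => sym_uw.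
rewrite [(_ - _)^T]linearB /= [(_ *: _)^T]linearZ /= !mulmxBl !mulmxBr -!scalemxAl -!scalemxAr !mxE.
rewrite !mxE in sym_uw; rewrite sym_uw; ring.
Qed.

Lemma bform_delta u i : bform u (delta_mx i 0) = \sum_j u j 0 * A j i.
Proof. by rewrite /bform -mulmxA -colE mxE; apply: eq_bigr => j _; rewrite !mxE. Qed.

Lemma qform_delta i : qform A (delta_mx i 0) = A i i.
Proof.
rewrite -[LHS]/(bform _ _) bform_delta (bigD1 i) //= big1 ?mxE ?eqxx ?mul1r ?addr0 //.
by move=> j /negbTE; rewrite mxE => ->; rewrite mul0r.
Qed.

Lemma qform_mulmx y : qform A y = \sum_i y i 0 * (A *m y) i 0.
Proof. by rewrite /qform -mulmxA mxE; apply: eq_bigr => j _; rewrite !mxE. Qed.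

End QuadraticForm.

Section SparseColumns.
Context {R : rcfType} {n : nat}.
Implicit Types (A : 'M[R]_n) (y : 'cV[R]_n).

Lemma norm2_ge0 y : 0 <= norm2 y.
Proof. exact: sqrtr_ge0. Qed.

Lemma sqr_norm2 y : norm2 y ^+ 2 = \sum_j y j 0 ^+ 2.
Proof. by rewrite sqr_sqrtr // sumr_ge0 // => j _; exact: sqr_ge0. Qed.

Lemma sqr_norm2_xhat A i S : norm2 (xhat A i S) ^+ 2 = \sum_(j in S) A j i ^+ 2.
Proof.
rewrite sqr_norm2 [RHS]big_mkcond; apply: eq_bigr => j _.
by rewrite mxE; case: ifP; rewrite ?expr0n.
Qed.

Lemma bform_xhat_delta A i S :
  bform A (xhat A i S) (delta_mx i 0) = norm2 (xhat A i S) ^+ 2.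
Proof.
rewrite bform_delta sqr_norm2_xhat [RHS]big_mkcond; apply: eq_bigr => j _.
by rewrite mxE; case: ifP; rewrite ?mul0r ?expr2.
Qed.

(* Positivity on [x - s e_i], with [s = ||x||] and [<x, A e_i> = s^2], gives
   [0 <= q(x) - 2 s^3 + s^2 A_ii <= 2 s^2 (c - s)]. *)
Lemma norm2_xhat_le A i S c : symmetric_mx A -> psd A ->
  A i i <= c -> qform A (xnorm A i S) <= c -> norm2 (xhat A i S) <= c.
Proof.
move=> symA psdA Aii_le qxn_le.
set x := xhat A i S; set s := norm2 x.
have [s0 | s_neq0] := eqVneq s 0.
  by rewrite s0 (le_trans _ Aii_le) // -qform_delta.
have s_gt0 : 0 < s by rewrite lt_def s_neq0 norm2_ge0.
have qx_le : qform A x <= c * s ^+ 2.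
  by move: qxn_le; rewrite /xnorm qformZ exprVn mulrC ler_pdivrMr ?exprn_gt0.
have := psdA (x - s *: delta_mx i 0).
rewrite qformBZ // bform_xhat_delta qform_delta -/x -/s => psd_x.
have Aii_gap : 0 <= s ^+ 2 * (c - A i i) by rewrite mulr_ge0 ?sqr_ge0 ?subr_ge0.
have : 0 <= s ^+ 2 * (c - s) by nra.
by rewrite pmulr_rge0 ?exprn_gt0 // subr_ge0.
Qed.

Lemma sum_mul_support y (a : 'I_n -> R) :
  \sum_j a j * y j 0 = \sum_j (if j \in [set j | y j 0 != 0] then a j else 0) * y j 0.
Proof.
by apply: eq_bigr => j _; rewrite inE; case: eqP => [->|]; rewrite ?mulr0.
Qed.

Lemma sum_sqr_if (T : {set 'I_n}) (a : 'I_n -> R) :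
  \sum_j (if j \in T then a j else 0) ^+ 2 = \sum_(j in T) a j ^+ 2.
Proof. by rewrite [RHS]big_mkcond; apply: eq_bigr => j _; case: ifP; rewrite ?expr0n. Qed.

Lemma abs_trmx_mul_le_norm2_xhat A i S k y : topk_support A k i S -> (norm0 y <= k)%N ->
  `|(A^T *m y) i 0| <= norm2 (xhat A i S) * norm2 y.
Proof.
move=> [cardS topS] supp_y.
rewrite ler_norm_sqr ?mulr_ge0 ?norm2_ge0 //.
have -> : (A^T *m y) i 0 = \sum_j A j i * y j 0.
  by rewrite mxE; apply: eq_bigr => j _; rewrite mxE.
rewrite sum_mul_support exprMn sqr_norm2_xhat sqr_norm2.
apply: le_trans (cauchy_schwarz _ (fun j => y j 0)) _; rewrite sum_sqr_if ler_wpM2r //.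
  by apply: sumr_ge0 => j _; exact: sqr_ge0.
apply: ler_sum_topset; first by rewrite cardS.
  by move=> j; exact: sqr_ge0.
move=> j l jS lS; rewrite -(real_normK (num_real (A l i))) -(real_normK (num_real (A j i))).
by rewrite ler_sqr ?nnegrE ?normr_ge0 ?topS.
Qed.

Lemma norm1_le_sqrt_norm0 y : \sum_j `|y j 0| <= Num.sqrt (norm0 y)%:R * norm2 y.
Proof.
apply: le_trans (ler_norm _) _.
rewrite ler_norm_sqr ?mulr_ge0 ?sqrtr_ge0 ?norm2_ge0 //.
have -> : \sum_j `|y j 0| = \sum_j (if j \in [set j | y j 0 != 0] then 1 else 0) * `|y j 0|.
  by apply: eq_bigr => j _; rewrite inE; case: eqP => [->|]; rewrite ?normr0 ?mulr0 ?mul1r.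
apply: le_trans (cauchy_schwarz _ (fun j => `|y j 0|)) _.
rewrite sum_sqr_if exprMn sqr_sqrtr ?ler0n // sqr_norm2.
rewrite (eq_bigr (fun _ => 1)) => [|j _]; last by rewrite expr1n.
rewrite sumr_const /norm0; apply: ler_wpM2l => //.
by apply: ler_sum => j _; rewrite real_normK ?num_real.
Qed.

Lemma qform_le_norm1 A y c : (forall i, `|(A *m y) i 0| <= c) ->
  qform A y <= c * \sum_j `|y j 0|.
Proof.
move=> Ay_le; rewrite qform_mulmx mulr_sumr; apply: ler_sum => i _.
apply: le_trans (ler_norm _) _; rewrite normrM mulrC.
by apply: ler_wpM2r; [exact: normr_ge0 | exact: Ay_le].
Qed.

End SparseColumns.

Theorem lemma1 (R : rcfType) (n k : nat) (A : 'M[R]_n)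
  (S : 'I_n -> {set 'I_n}) (v : 'cV[R]_n) :
  symmetric_mx A -> psd A -> (1 <= k)%N -> (k <= n)%N ->
  (forall i, topk_support A k i (S i)) ->
  candidate A S v ->
  (forall w, candidate A S w -> qform A w <= qform A v) ->
  forall y : 'cV[R]_n, norm2 y = 1 -> (norm0 y <= k)%N ->
    qform A v >= qform A y / Num.sqrt (k%:R).
Proof.
move=> symA psdA k_gt0 _ topk _ best y y_unit supp_y.
set c := qform A v.
have xhat_le i : norm2 (xhat A i (S i)) <= c.
  apply: norm2_xhat_le => //; last by apply: best; exists i; left.
  by rewrite -qform_delta; apply: best; exists i; right.
have Ay_le i : `|(A *m y) i 0| <= c.
  rewrite -[in A *m y]symA; apply: le_trans (xhat_le i).
  by rewrite -[X in _ <= X]mulr1 -y_unit; exact: abs_trmx_mul_le_norm2_xhat.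
rewrite ler_pdivrMr ?sqrtr_gt0 ?ltr0n //.
apply: le_trans (qform_le_norm1 _ _ _ Ay_le) _.
rewrite ler_wpM2l ?(psdA v) //; apply: le_trans (norm1_le_sqrt_norm0 y) _.
by rewrite y_unit mulr1 ler_wsqrtr // ler_nat.
Qed.
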